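(* Let $\mathcal{H}_C=\mathcal{H}_{A_1}\oplus\cdots\oplus\mathcal{H}_{A_n}$ be a finite-dimensional Hilbert space decomposed into mutually orthogonal subspaces with orthogonal projectors $\hat P_{A_\ell A_\ell}$, and let $\Phi_{CC}$ be a quantum channel on $\mathcal{H}_C$ with Kraus set $\{\hat M^{(j)}_{CC}\}_j$. Then $\Phi_{CC}$ admits the multi-block PCDS structure if and only if $\hat M^{(j)}_{CC}=\bigoplus_{\ell=1}^n\hat M^{(j)}_{A_\ell A_\ell}$ for all $j$, equivalently $\hat M^{(j)}_{A_\ell A_{\ell'}}=0$ for all $j$ and all $\ell\ne\ell'$, where $\hat M^{(j)}_{A_\ell A_{\ell'}}=\hat P_{A_\ell A_\ell}\hat M^{(j)}_{CC}\hat P_{A_{\ell'}A_{\ell'}}$.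
   Context: For an operator $\hat\Theta_{CC}$ on $\mathcal{H}_C$ let $\hat\Theta_{A_\ell A_{\ell'}}=\hat P_{A_\ell A_\ell}\hat\Theta_{CC}\hat P_{A_{\ell'}A_{\ell'}}$. A channel $\Phi_{CC}$ has the multi-block PCDS structure if there are linear maps $\Phi_{A_\ell A_\ell}$ on operators $\mathcal{H}_{A_\ell}\to\mathcal{H}_{A_\ell}$ and $\Phi^{(off)}_{A_\ell A_{\ell'}}$ ($\ell\neq\ell'$) on operators $\mathcal{H}_{A_{\ell'}}\to\mathcal{H}_{A_\ell}$ such that $\Phi_{CC}[\hat\Theta_{CC}]=\sum_{\ell}\Phi_{A_\ell A_\ell}[\hat\Theta_{A_\ell A_\ell}]+\sum_{\ell\neq\ell'}\Phi^{(off)}_{A_\ell A_{\ell'}}[\hat\Theta_{A_\ell A_{\ell'}}]$ for all $\hat\Theta_{CC}$. *)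

From HB Require Import structures.
From mathcomp Require Import all_boot all_order all_algebra.
From mathcomp Require Import reals.
From mathcomp Require Import complex.
Set Implicit Arguments. Unset Strict Implicit. Unset Printing Implicit Defensive.
Import Order.TTheory GRing.Theory Num.Theory.
Local Open Scope ring_scope.

Section Defs.
Variable C : numClosedFieldType.
Variable d : nat.

Definition adjmx (A : 'M[C]_d) : 'M[C]_d := (map_mx Num.conj A)^T.

Definition orth_decomposition (n : nat) (P : 'I_n -> 'M[C]_d) : Prop :=
  [/\ forall l, adjmx (P l) = P l,
      forall l, P l *m P l = P l,
      forall l l', l != l' -> P l *m P l' = 0
    & \sum_(l < n) P l = 1%:M].

Definition kraus_channel (m : nat) (M : 'I_m -> 'M[C]_d)
  (Phi : 'M[C]_d -> 'M[C]_d) : Prop :=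
  \sum_(j < m) adjmx (M j) *m M j = 1%:M /\
  forall Theta, Phi Theta = \sum_(j < m) M j *m Theta *m adjmx (M j).

Definition blk (n : nat) (P : 'I_n -> 'M[C]_d) (l l' : 'I_n) (Theta : 'M[C]_d)
  : 'M[C]_d := P l *m Theta *m P l'.

(* The space of operators H_{A_l'} -> H_{A_l}, realised inside 'M_d as the
   matrices X with P_l X P_l' = X. *)
Definition in_blk (n : nat) (P : 'I_n -> 'M[C]_d) (l l' : 'I_n) (X : 'M[C]_d)
  : Prop := P l *m X *m P l' = X.

(* F is a linear map from operators H_{A_l'} -> H_{A_l} to operators
   H_{A_l'} -> H_{A_l} (only its values on that block space matter). *)
Definition blk_linear_map (n : nat) (P : 'I_n -> 'M[C]_d) (l l' : 'I_n)
  (F : 'M[C]_d -> 'M[C]_d) : Prop :=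
  (forall X, in_blk P l l' X -> in_blk P l l' (F X)) /\
  (forall (a : C) X Y, in_blk P l l' X -> in_blk P l l' Y ->
      F (a *: X + Y) = a *: F X + F Y).

Definition multiblock_PCDS (n : nat) (P : 'I_n -> 'M[C]_d)
  (Phi : 'M[C]_d -> 'M[C]_d) : Prop :=
  exists (Fd : 'I_n -> 'M[C]_d -> 'M[C]_d)
         (Foff : 'I_n -> 'I_n -> 'M[C]_d -> 'M[C]_d),
    (forall l, blk_linear_map P l l (Fd l)) /\
    (forall l l', l != l' -> blk_linear_map P l l' (Foff l l')) /\
    forall Theta,
      Phi Theta = \sum_(l < n) Fd l (blk P l l Theta)
                + \sum_(l < n) \sum_(l' < n | l != l') Foff l l' (blk P l l' Theta).

End Defs.

(* Block-diagonal Kraus operators commute with every projector, so the channel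
   maps each block H_{A_l'} -> H_{A_l} into itself and is its own block map.
   Conversely, under the PCDS structure Phi(P_l) = Phi_{A_l A_l}(P_l) lies in
   the (l,l) block, so for a <> l the compression
   P_a Phi(P_l) P_a = sum_j (P_a M_j P_l)(P_a M_j P_l)^* vanishes; a vanishing
   sum of positive matrices has vanishing terms, whence P_a M_j P_l = 0. *)

From HB Require Import structures.
From mathcomp Require Import all_boot all_order all_algebra.
From mathcomp Require Import reals.
From mathcomp Require Import complex.
Import Order.TTheory GRing.Theory Num.Theory.
Local Open Scope ring_scope.
Local Open Scope complex_scope.
Set Implicit Arguments. Unset Strict Implicit.

Section Adjoint.
Variables (C : numClosedFieldType) (d : nat).
Implicit Types A B : 'M[C]_d.

Lemma adjmx0 : adjmx 0 = 0 :> 'M[C]_d.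
Proof. by rewrite /adjmx map_mx0 trmx0. Qed.

Lemma adjmxM A B : adjmx (A *m B) = adjmx B *m adjmx A.
Proof. by rewrite /adjmx map_mxM trmx_mul. Qed.

Lemma mxtrace_mulmx_adjmx A :
  \tr (A *m adjmx A) = \sum_(p : 'I_d * 'I_d) `|A p.1 p.2| ^+ 2.
Proof.
rewrite -(pair_bigA _ (fun i k => `|A i k| ^+ 2)).
apply: eq_bigr => i _; rewrite mxE.
by apply: eq_bigr => k _; rewrite !mxE normCK.
Qed.

Lemma mxtrace_mulmx_adjmx_ge0 A : 0 <= \tr (A *m adjmx A).
Proof.
by rewrite mxtrace_mulmx_adjmx sumr_ge0 // => p _; rewrite exprn_ge0.
Qed.

Lemma mxtrace_mulmx_adjmx_eq0 A : \tr (A *m adjmx A) = 0 -> A = 0.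
Proof.
rewrite mxtrace_mulmx_adjmx => /psumr_eq0P normA0.
apply/matrixP => i k; rewrite mxE; apply/normr0_eq0/eqP.
by rewrite -sqrf_eq0 (normA0 _ (i, k)) // => p _; rewrite exprn_ge0.
Qed.

Lemma sum_mulmx_adjmx_eq0 (m : nat) (N : 'I_m -> 'M[C]_d) :
  \sum_(j < m) N j *m adjmx (N j) = 0 -> forall j, N j = 0.
Proof.
move=> sumN0 j; apply: mxtrace_mulmx_adjmx_eq0.
have trace0 : \sum_(j < m) \tr (N j *m adjmx (N j)) = 0.
  by rewrite -raddf_sum sumN0 raddf0.
by apply: (psumr_eq0P _ trace0) => // k _; apply: mxtrace_mulmx_adjmx_ge0.
Qed.

End Adjoint.

Section Kraus.
Variables (C : numClosedFieldType) (d m : nat).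
Variables (M : 'I_m -> 'M[C]_d) (Phi : 'M[C]_d -> 'M[C]_d).
Hypothesis Phi_kraus :
  forall Theta, Phi Theta = \sum_(j < m) M j *m Theta *m adjmx (M j).

Lemma kraus_linear (a : C) X Y : Phi (a *: X + Y) = a *: Phi X + Phi Y.
Proof.
rewrite !Phi_kraus scaler_sumr -big_split; apply: eq_bigr => j _.
by rewrite mulmxDr mulmxDl -scalemxAr -scalemxAl.
Qed.

Lemma kraus0 : Phi 0 = 0.
Proof. by rewrite Phi_kraus big1 // => j _; rewrite mulmx0 mul0mx. Qed.

Lemma kraus_sum I (r : seq I) (F : I -> 'M[C]_d) :
  Phi (\sum_(i <- r) F i) = \sum_(i <- r) Phi (F i).
Proof.
apply: (big_morph Phi _ kraus0) => X Y.
by rewrite -[X]scale1r kraus_linear !scale1r.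
Qed.

Lemma mulmx_kraus_adjmx A Q :
  A *m Phi (Q *m adjmx Q) *m adjmx A =
  \sum_(j < m) (A *m M j *m Q) *m adjmx (A *m M j *m Q).
Proof.
rewrite Phi_kraus mulmx_sumr mulmx_suml; apply: eq_bigr => j _.
by rewrite !adjmxM !mulmxA.
Qed.

End Kraus.

Section Decomposition.
Variables (C : numClosedFieldType) (d n : nat) (P : 'I_n -> 'M[C]_d).
Hypothesis P_decomp : orth_decomposition P.
Implicit Types X : 'M[C]_d.

Definition blk_diagonal X := forall l l', l != l' -> blk P l l' X = 0.

Lemma adjmx_proj l : adjmx (P l) = P l.
Proof. by case: P_decomp. Qed.

Lemma mulmx_proj l l' : P l *m P l' = if l == l' then P l else 0.
Proof.
case: P_decomp => _ Pidem Porth _.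
by have [<- | /Porth] := eqVneq l l'.
Qed.

Lemma blk_proj k k' l :
  blk P k k' (P l) = if (k == l) && (k' == l) then P l else 0.
Proof.
rewrite /blk mulmx_proj; have [-> | _] := eqVneq k l; last by rewrite mul0mx.
by rewrite mulmx_proj eq_sym.
Qed.

Lemma blk_sum X : X = \sum_(l < n) \sum_(l' < n) blk P l l' X.
Proof.
case: P_decomp => _ _ _ sumP.
rewrite -[LHS]mul1mx -[LHS]mulmx1 -sumP mulmx_suml mulmx_suml.
by apply: eq_bigr => l _; rewrite mulmx_sumr.
Qed.

Lemma blk_diagonalE X : blk_diagonal X <-> X = \sum_(l < n) blk P l l X.
Proof.
split=> [X_diag | ->].
  rewrite {1}[X]blk_sum; apply: eq_bigr => l _.
  rewrite (bigD1 l) //= big1 ?addr0 // => l' l'l.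
  by apply: X_diag; rewrite eq_sym.
move=> a b ab; rewrite /blk mulmx_sumr mulmx_suml big1 // => l _.
rewrite !mulmxA mulmx_proj -!mulmxA mulmx_proj.
have [<- | _] := eqVneq a l; last by rewrite !mul0mx.
by rewrite (negPf ab) !mulmx0.
Qed.

Lemma blk_diagonal_comm X l : blk_diagonal X -> P l *m X = X *m P l.
Proof.
move=> /blk_diagonalE X_diag; rewrite X_diag mulmx_sumr mulmx_suml.
apply: eq_bigr => k _; rewrite /blk !mulmxA mulmx_proj -!mulmxA mulmx_proj.
by case: eqVneq => [-> | _]; rewrite ?mul0mx ?mulmx0.
Qed.

Lemma blk_diagonal_adjmx X : blk_diagonal X -> blk_diagonal (adjmx X).
Proof.
move=> X_diag l l' ll'.
rewrite /blk -adjmx_proj -[P l']adjmx_proj -!adjmxM mulmxA -/(blk P l' l X).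
by rewrite X_diag ?adjmx0 // eq_sym.
Qed.

Lemma blk_linear_map0 l l' F : blk_linear_map P l l' F -> F 0 = 0.
Proof.
case=> _ F_lin; have blk0 : in_blk P l l' 0 by rewrite /in_blk mulmx0 mul0mx.
have := F_lin 1 0 0 blk0 blk0; rewrite !scale1r addr0 => F00.
by apply/(addrI (F 0)); rewrite addr0 -F00.
Qed.

Variables (m : nat) (M : 'I_m -> 'M[C]_d) (Phi : 'M[C]_d -> 'M[C]_d).
Hypothesis Phi_kraus :
  forall Theta, Phi Theta = \sum_(j < m) M j *m Theta *m adjmx (M j).

Lemma pcds_image_proj l : multiblock_PCDS P Phi -> in_blk P l l (Phi (P l)).
Proof.
case=> Fd [Foff [Fd_lin [Foff_lin ->]]].
rewrite [X in X + _](bigD1 l) //= big1 => [|k kl]; last first.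
  by rewrite blk_proj (negPf kl) (blk_linear_map0 (Fd_lin k)).
rewrite big1 => [|k _]; last first.
  apply: big1 => k' kk'; rewrite blk_proj.
  have -> : (k == l) && (k' == l) = false.
    by apply/negbTE; apply: contra kk' => /andP[/eqP -> /eqP ->].
  exact: blk_linear_map0 (Foff_lin _ _ kk').
rewrite !addr0 blk_proj eqxx; apply: (proj1 (Fd_lin l)).
by have := blk_proj l l l; rewrite eqxx.
Qed.

Lemma pcds_kraus_blk_diagonal j : multiblock_PCDS P Phi -> blk_diagonal (M j).
Proof.
move=> pcds a l al; have Phi_blk := pcds_image_proj l pcds.
pose N k := P a *m M k *m P l.
suff sumN0 : \sum_(k < m) N k *m adjmx (N k) = 0.
  exact: (sum_mulmx_adjmx_eq0 sumN0 j).
rewrite -(mulmx_kraus_adjmx Phi_kraus) adjmx_proj mulmx_proj eqxx.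
rewrite -[Phi _]Phi_blk.
by rewrite !mulmxA mulmx_proj (negPf al) !mul0mx.
Qed.

Lemma kraus_in_blk l l' X :
  (forall j, blk_diagonal (M j)) -> in_blk P l l' X -> in_blk P l l' (Phi X).
Proof.
move=> M_diag X_blk; rewrite /in_blk Phi_kraus mulmx_sumr mulmx_suml.
apply: eq_bigr => j _; have adjM_diag := blk_diagonal_adjmx (M_diag j).
rewrite !mulmxA blk_diagonal_comm // -!mulmxA -blk_diagonal_comm //.
by rewrite -[in RHS]X_blk /blk !mulmxA.
Qed.

Lemma kraus_blk_linear_map l l' :
  (forall j, blk_diagonal (M j)) -> blk_linear_map P l l' Phi.
Proof.
move=> M_diag; split=> [X | a X Y _ _]; first exact: kraus_in_blk.
exact: kraus_linear.
Qed.

Lemma kraus_blk_diagonal_pcds :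
  (forall j, blk_diagonal (M j)) -> multiblock_PCDS P Phi.
Proof.
move=> M_diag; exists (fun _ => Phi), (fun _ _ => Phi).
split=> [l | ]; first exact: kraus_blk_linear_map.
split=> [l l' _ | Theta]; first exact: kraus_blk_linear_map.
rewrite {1}[Theta]blk_sum (kraus_sum Phi_kraus) -big_split.
apply: eq_bigr => l _; rewrite (kraus_sum Phi_kraus) (bigD1 l) //=.
by under [in RHS]eq_bigl do rewrite eq_sym.
Qed.

End Decomposition.

Theorem theorem3 (R : realType) (d n m : nat)
  (P : 'I_n -> 'M[R[i]]_d) (M : 'I_m -> 'M[R[i]]_d)
  (Phi : 'M[R[i]]_d -> 'M[R[i]]_d) :
  orth_decomposition P ->
  kraus_channel M Phi ->
  (multiblock_PCDS P Phi <->
     (forall j, M j = \sum_(l < n) blk P l l (M j))) /\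
  ((forall j, M j = \sum_(l < n) blk P l l (M j)) <->
     (forall j (l l' : 'I_n), l != l' -> blk P l l' (M j) = 0)).
Proof.
move=> P_decomp [_ Phi_kraus].
have diagE : (forall j, M j = \sum_(l < n) blk P l l (M j)) <->
             (forall j, blk_diagonal P (M j)).
  by split=> M_diag j; apply/(blk_diagonalE P_decomp).
split=> //; rewrite diagE; split.
- by move=> pcds j; apply: pcds_kraus_blk_diagonal.
- exact: kraus_blk_diagonal_pcds.
Qed.
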